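(* Let $k$ be a field and let $h_\bullet=(h_0,h_1,h_2,\ldots)$ be a sequence of nonnegative integers with $h_0=1$ that is unimodal at each tail. Let $n=h_1$ if $h_1\ge1$ and $n=1$ if $h_1=0$. Then there is an almost reverse lexicographic ideal $I$ in $R=k[x_1,\ldots,x_n]$ such that $H(R/I,d)=h_d$ for all $d\ge0$.
   Context: $H(R/I,d)=\dim_k(R/I)_d$. Degree reverse lexicographic order: for $M=x^\alpha,N=x^\beta$, $M>N$ iff $\deg M>\deg N$, or degrees are equal and for the largest $s$ with $\alpha_s\neq\beta_s$ one has $\alpha_s<\beta_s$. A monomial ideal $I$ is almost reverse lexicographic if for every monomial $M$ and every minimal monomial generator $N$ of $I$ with $\deg M=\deg N$ and $M>N$, $M\in I$ (the zero ideal counts). For a sequence $h_\bullet$ of nonnegative integers with $h_0=1$: $h^{(0)}_\bullet=h_\bullet$ and, for $1\le i<h_1$, $h^{(i)}_0=1$, $h^{(i)}_d=\max\{0,h^{(i-1)}_d-h^{(i-1)}_{d-1}\}$ for $d\ge1$. For $0\le i<\max\{1,h_1\}$, $r_i=\min\{d\ge1:h^{(i)}_d\le h^{(i)}_{d-1}\}$ ($\infty$ if none), and $D(h_\bullet)=\min\{i:r_i<\infty\}$. The sequence is unimodal at each tail if for every $i$ with $D(h_\bullet)\le i<\max\{1,h_1\}$, $h^{(i)}_d\le h^{(i)}_{d-1}$ for all $d\ge r_i$. *)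

From HB Require Import structures.
From mathcomp Require Import all_boot all_order all_algebra.
From mathcomp Require Import mpoly.
Set Implicit Arguments. Unset Strict Implicit. Unset Printing Implicit Defensive.
Import Order.TTheory GRing.Theory.
Local Open Scope ring_scope.

Fixpoint hdiff (h : nat -> nat) (i : nat) : nat -> nat :=
  match i with
  | 0 => h
  | i'.+1 => fun d => match d with
                      | 0 => 1%N
                      | d'.+1 => (hdiff h i' d'.+1 - hdiff h i' d')%N
                      end
  end.

Definition is_r (h : nat -> nat) (i r : nat) : Prop :=
  [/\ (1 <= r)%N, (hdiff h i r <= hdiff h i r.-1)%N &
      forall e, (1 <= e)%N -> (e < r)%N -> (hdiff h i e.-1 < hdiff h i e)%N].

Definition r_finite (h : nat -> nat) (i : nat) : Prop :=
  exists d, (1 <= d)%N /\ (hdiff h i d <= hdiff h i d.-1)%N.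

(* unimodal at each tail: for every i with D(h) <= i < max(1,h_1)
   (D(h) <= i  iff  r_j < oo for some j <= i), h^(i)_d <= h^(i)_{d-1} for all d >= r_i *)
Definition unimodal_at_each_tail (h : nat -> nat) : Prop :=
  forall i, (i < maxn 1 (h 1%N))%N ->
    (exists j, (j <= i)%N /\ r_finite h j) ->
    forall r, is_r h i r ->
    forall d, (r <= d)%N -> (hdiff h i d <= hdiff h i d.-1)%N.

Definition is_ideal (k : fieldType) (n : nat) (I : {mpoly k[n]} -> Prop) : Prop :=
  [/\ I 0, (forall p q, I p -> I q -> I (p + q)) &
      (forall p q, I q -> I (p * q))].

(* monomial ideal: an ideal generated by monomials, i.e. containing every
   monomial occurring in any of its elements *)
Definition is_monomial_ideal (k : fieldType) (n : nat) (I : {mpoly k[n]} -> Prop) : Prop :=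
  is_ideal I /\ forall p, I p -> forall m, m \in msupp p -> I 'X_[m].

Definition degrevlex_gt (n : nat) (a b : 'X_{1..n}) : Prop :=
  (mdeg b < mdeg a)%N \/
  (mdeg a = mdeg b /\
   exists s : 'I_n, (a s < b s)%N /\ forall t : 'I_n, (s < t)%N -> a t = b t).

Definition min_mon_gen (k : fieldType) (n : nat) (I : {mpoly k[n]} -> Prop)
    (b : 'X_{1..n}) : Prop :=
  I 'X_[b] /\ forall c : 'X_{1..n}, (c <= b)%MM -> c != b -> ~ I 'X_[c].

Definition almost_revlex (k : fieldType) (n : nat) (I : {mpoly k[n]} -> Prop) : Prop :=
  forall (a b : 'X_{1..n}), min_mon_gen I b -> mdeg a = mdeg b ->
    degrevlex_gt a b -> I 'X_[a].

(* H(R/I, d) = dim_k (R/I)_d = v : there are v elements of R_d linearly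
   independent modulo I, but no v+1 such elements. *)
Definition lin_indep_mod (k : fieldType) (n : nat) (I : {mpoly k[n]} -> Prop)
    (m : nat) (ps : 'I_m -> {mpoly k[n]}) : Prop :=
  forall c : 'I_m -> k, I (\sum_(i < m) c i *: ps i) -> forall i, c i = 0.

Definition hilb_eq (k : fieldType) (n : nat) (I : {mpoly k[n]} -> Prop)
    (d v : nat) : Prop :=
  (exists ps : 'I_v -> {mpoly k[n]},
      (forall i, ps i \is d.-homog) /\ lin_indep_mod I ps) /\
  (forall ps : 'I_v.+1 -> {mpoly k[n]},
      (forall i, ps i \is d.-homog) -> ~ lin_indep_mod I ps).

From HB Require Import structures.
From mathcomp Require Import all_boot all_order all_algebra.
From mathcomp Require Import mpoly.
From mathcomp Require Import zify.
From Stdlib Require Import Classical.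
Set Implicit Arguments. Unset Strict Implicit. Unset Printing Implicit Defensive.

(* The ideal is spanned by the monomials outside a set S of standard monomials
   which is closed under division, has h_d elements in degree d, and whose
   complement is almost reverse lexicographic.  S is built by induction on
   n = h_1 from such a set T in n variables realising the first difference of h,
   which is again unimodal at each tail.  Write a monomial in n + 1 variables as
   q x_{n+1}^j.  Up to the first descent r of h, q x_{n+1}^j is standard iff q
   is, so that degree d contains sum_{e <= d} (h_e - h_{e-1}) = h_d standard
   monomials.  From r on h is nonincreasing, and degree d keeps the h_d
   degrevlex-smallest monomials q x_{n+1}^(d - deg q) with q standard of degree
   < r: decreasing initial segments of one ordered list give both closure under
   division and the almost reverse lexicographic property. *)

Section MonomialSnoc.
Variable n : nat.

Definition mnm_init (m : 'X_{1..n.+1}) : 'X_{1..n} :=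
  [multinom m (lift ord_max i) | i < n].

Definition mnm_snoc (q : 'X_{1..n}) (j : nat) : 'X_{1..n.+1} :=
  [multinom (if unlift ord_max i is Some i' then q i' else j) | i < n.+1].

Lemma lift_max (i : 'I_n) : lift ord_max i = i :> nat.
Proof. by rewrite /= /bump leqNgt ltn_ord. Qed.

Lemma mnm_snoc_lift q j i : mnm_snoc q j (lift ord_max i) = q i.
Proof. by rewrite mnmE liftK. Qed.

Lemma mnm_snoc_last q j : mnm_snoc q j ord_max = j.
Proof. by rewrite mnmE unlift_none. Qed.

Lemma mnm_init_snoc q j : mnm_init (mnm_snoc q j) = q.
Proof. by apply/mnmP=> i; rewrite mnmE mnm_snoc_lift. Qed.

Lemma mnm_snoc_init m : mnm_snoc (mnm_init m) (m ord_max) = m.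
Proof.
apply/mnmP=> i; rewrite mnmE; case: unliftP => [i' ->|->] //.
by rewrite mnmE.
Qed.

Lemma mnm_snoc_inj q1 j1 q2 j2 :
  mnm_snoc q1 j1 = mnm_snoc q2 j2 -> q1 = q2 /\ j1 = j2.
Proof.
move=> e; split; first by rewrite -(mnm_init_snoc q1 j1) e mnm_init_snoc.
by rewrite -(mnm_snoc_last q1 j1) e mnm_snoc_last.
Qed.

Lemma mdeg_snoc q j : mdeg (mnm_snoc q j) = mdeg q + j.
Proof.
rewrite !mdegE big_ord_recr /= mnm_snoc_last; congr (_ + _).
apply: eq_bigr => i _; rewrite -(mnm_snoc_lift q j); congr (mnm_snoc q j _).
exact/val_inj/esym/lift_max.
Qed.

Lemma mdeg_init m : mdeg m = mdeg (mnm_init m) + m ord_max.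
Proof. by rewrite -{1}(mnm_snoc_init m) mdeg_snoc. Qed.

Lemma lem_snoc q1 j1 q2 j2 :
  (mnm_snoc q1 j1 <= mnm_snoc q2 j2)%MM = (q1 <= q2)%MM && (j1 <= j2).
Proof.
apply/mnm_lepP/andP => [le|[/mnm_lepP le1 le2] i].
  split; last by move: (le ord_max); rewrite !mnm_snoc_last.
  by apply/mnm_lepP => i; move: (le (lift ord_max i)); rewrite !mnm_snoc_lift.
case: (unliftP ord_max i) => [i' ->|->]; first by rewrite !mnm_snoc_lift.
by rewrite !mnm_snoc_last.
Qed.

Lemma lem_init m1 m2 :
  (m1 <= m2)%MM = (mnm_init m1 <= mnm_init m2)%MM && (m1 ord_max <= m2 ord_max).
Proof. by rewrite -{1}(mnm_snoc_init m1) -{1}(mnm_snoc_init m2) lem_snoc. Qed.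

End MonomialSnoc.

Lemma lem_mdeg n (m1 m2 : 'X_{1..n}) : (m1 <= m2)%MM -> mdeg m1 <= mdeg m2.
Proof. by move=> le; rewrite -(submK le) mdegD leq_addl. Qed.

Lemma lem_mdeg_lt n (m1 m2 : 'X_{1..n}) :
  (m1 <= m2)%MM -> m1 != m2 -> mdeg m1 < mdeg m2.
Proof.
move=> le ne; rewrite -(submK le) mdegD -{1}[mdeg m1]add0n ltn_add2r lt0n mdeg_eq0.
by apply: contraNneq ne => e; rewrite -(submK le) e add0m.
Qed.

Fixpoint colex_leq (k : nat) (f g : nat -> nat) : bool :=
  if k is k'.+1 then (f k' < g k') || (f k' == g k') && colex_leq k' f g
  else true.

Lemma colex_leq_trans k : transitive (colex_leq k).
Proof.
move=> g f h; elim: k => //= k IH.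
move=> /orP[lt1|/andP[/eqP e1 le1]] /orP[lt2|/andP[/eqP e2 le2]].
- by rewrite (ltn_trans lt1 lt2).
- by rewrite -e2 lt1.
- by rewrite e1 lt2.
- by rewrite e1 e2 eqxx (IH le1 le2) orbT.
Qed.

Lemma colex_leq_total k : total (colex_leq k).
Proof. by move=> f g; elim: k => //= k IH; case: ltngtP. Qed.

Lemma colex_leqNgt k f g s : s < k -> f s < g s ->
  (forall t, s < t < k -> f t = g t) -> ~~ colex_leq k g f.
Proof.
elim: k => // k IH; rewrite ltnS leq_eqVlt => /orP[/eqP-> | lt_sk] lt eq /=.
  by rewrite ltnNge (ltnW lt) (gtn_eqF lt).
rewrite eq ?lt_sk ?ltnSn // ltnn eqxx /=.
by apply: IH => // t /andP[st tk]; rewrite eq // st ltnW.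
Qed.

Definition grevlex_leq n (q q' : 'X_{1..n}) : bool :=
  (mdeg q < mdeg q') || (mdeg q == mdeg q') && colex_leq n (nth 0 q') (nth 0 q).

Lemma grevlex_leq_trans n : transitive (@grevlex_leq n).
Proof.
move=> q2 q1 q3 /orP[l1|/andP[/eqP e1 r1]] /orP[l2|/andP[/eqP e2 r2]];
  rewrite /grevlex_leq.
- by rewrite (ltn_trans l1 l2).
- by rewrite -e2 l1.
- by rewrite e1 l2.
- by rewrite e1 e2 eqxx (colex_leq_trans r2 r1) orbT.
Qed.

Lemma grevlex_leq_total n : total (@grevlex_leq n).
Proof.
move=> q q'; rewrite /grevlex_leq; case: ltngtP => //= _.
exact: colex_leq_total.
Qed.

Lemma grevlex_leqNgt n (q q' : 'X_{1..n}) :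
  degrevlex_gt q q' -> ~~ grevlex_leq q q'.
Proof.
rewrite /grevlex_leq => -[lt|[e [s [lt eq]]]].
  by rewrite ltnNge (ltnW lt) (gtn_eqF lt).
rewrite e ltnn eqxx /=; apply: (@colex_leqNgt _ _ _ s) => //.
  by rewrite -!mnm_nth.
by move=> t /andP[st tn]; have := eq (Ordinal tn) st; rewrite !(mnm_nth 0).
Qed.

Lemma degrevlex_gt_init n (a b : 'X_{1..n.+1}) : mdeg a = mdeg b ->
  degrevlex_gt a b ->
  a ord_max <= b ord_max /\ degrevlex_gt (mnm_init a) (mnm_init b).
Proof.
move=> eab [|[_ [s [lt_s eq_s]]]]; first by rewrite eab ltnn.
move: eab; rewrite (mdeg_init a) (mdeg_init b) => eab.
case: (unliftP ord_max s) lt_s eq_s => [s' -> | ->] lt_s eq_s; last first.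
  by split; [exact: ltnW | left; lia].
have eq_last : a ord_max = b ord_max.
  by apply: eq_s; rewrite lift_max ltn_ord.
split; [by rewrite eq_last | right; split; first lia].
exists s'; split; first by rewrite !mnmE.
move=> t lt_t; rewrite !mnmE; apply: eq_s.
by rewrite !lift_max.
Qed.

Lemma mem_take_sorted (T : eqType) (le : rel T) (s : seq T) c x y :
  transitive le -> sorted le s -> x \in take c s -> y \in s -> ~~ le x y ->
  y \in take c s.
Proof.
move=> le_tr le_s x_in y_in; apply: contraR => y_out.
have : pairwise le (take c s ++ drop c s) by rewrite cat_take_drop -sorted_pairwise.
rewrite pairwise_cat => /and3P[/allrelP le_take _ _]; apply: le_take x_in _.
by move: y_in; rewrite -{1}(cat_take_drop c s) mem_cat (negbTE y_out).
Qed.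

Lemma hdiffS h i d : hdiff h i.+1 d = hdiff (hdiff h 1) i d.
Proof. by elim: i d => [|i IH] [|d] //=; rewrite -!IH. Qed.

Lemma sum_hdiff1 h k : h 0 = 1 -> (forall e, 0 < e <= k -> h e.-1 <= h e) ->
  \sum_(e < k.+1) hdiff h 1 e = h k.
Proof.
move=> h0; elim: k => [|k IH] h_incr; first by rewrite big_ord1 h0.
rewrite big_ord_recr /= IH => [|e /andP[e0 ek]]; last by rewrite h_incr // e0 ltnW.
by have := h_incr k.+1 (leqnn _); rewrite /=; lia.
Qed.

Section Unimodal.
Variable h : nat -> nat.
Hypotheses (h0 : h 0 = 1) (h_unimodal : unimodal_at_each_tail h).

Lemma unimodal_nonincreasing : h 1 <= 1 -> forall d, 0 < d -> h d <= h d.-1.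
Proof.
move=> h1 d d_gt0; apply: (@h_unimodal 0 _ _ 1) => //.
- by rewrite leq_max ltnSn.
- by exists 0; split => //; exists 1; rewrite /= h0.
- by split => //= [|e e1 e2]; [rewrite h0 | lia].
Qed.

Lemma unimodal_vanish : h 1 = 0 -> forall d, 0 < d -> h d = 0.
Proof.
move=> h1; elim=> // d IH _; apply/eqP; rewrite -leqn0.
case: d IH => [|d] IH; first by rewrite h1.
by rewrite -(IH isT) (unimodal_nonincreasing _ (d := d.+2)) ?h1.
Qed.

Lemma unimodal_hdiff1 : unimodal_at_each_tail (hdiff h 1).
Proof.
case: (leqP (h 1) 1) => [h1 | h1] i.
  rewrite /= h0 => /[swap] _; have -> : maxn 1 (h 1 - 1) = 1 by lia.
  rewrite ltnS leqn0 => /eqP-> r [r_gt0 _ _] [//|d] _ /=.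
  by have /= := unimodal_nonincreasing h1 (d := d.+1) isT; lia.
rewrite /= h0 subn1 => i_lt [j [ji rj]] r ir d rd; rewrite -!hdiffS.
apply: (@h_unimodal i.+1 _ _ r) => //.
- by move: i_lt h1; lia.
- by exists j.+1; split => //; case: rj => e; rewrite -!hdiffS; exists e.
- by case: ir => r1 hr hlt; split => // [|e e1 er]; rewrite !hdiffS //; exact: hlt.
Qed.

End Unimodal.

Definition order_ideal n (S : pred 'X_{1..n}) : Prop :=
  forall m c, S m -> (c <= m)%MM -> S c.

Definition std_almost_revlex n (S : pred 'X_{1..n}) : Prop :=
  forall a b, ~~ S b -> (forall c, (c <= b)%MM -> c != b -> S c) ->
    mdeg a = mdeg b -> degrevlex_gt a b -> ~~ S a.

Definition enumerates n (h : nat -> nat) (S : pred 'X_{1..n})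
    (L : nat -> seq 'X_{1..n}) : Prop :=
  forall d, [/\ uniq (L d), size (L d) = h d &
                forall m, (m \in L d) = (mdeg m == d) && S m].

Definition std_set n (h : nat -> nat) (S : pred 'X_{1..n}) : Prop :=
  [/\ order_ideal S, std_almost_revlex S & exists L, enumerates h S L].
Arguments std_set : clear implicits.

Lemma std_set_trivial n (h : nat -> nat) :
  h 0 = 1 -> (forall d, 0 < d -> h d = 0) ->
  exists S, std_set n h S.
Proof.
move=> h0 h_vanish; exists [pred m | mdeg m == 0]; split.
- by move=> m c /eqP m0 /lem_mdeg; rewrite /= m0 leqn0.
- by move=> a b nb _ eab _; rewrite /= eab.
exists (fun d => if d == 0 then [:: 0%MM] else [::]) => d.
case: eqP => [->|/eqP d_neq0].
  by split=> // m; rewrite mem_seq1 inE andbb mdeg_eq0.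
split=> // [|m]; first by rewrite h_vanish // lt0n.
by rewrite in_nil inE; case: eqP => // ->; rewrite (negbTE d_neq0).
Qed.

Section Pad.
Variable n : nat.

Definition mnm_pad (d : nat) (q : 'X_{1..n}) : 'X_{1..n.+1} :=
  mnm_snoc q (d - mdeg q).

Lemma mnm_pad_inj d : injective (mnm_pad d).
Proof. by move=> q1 q2 /mnm_snoc_inj[]. Qed.

Lemma mem_map_pad d (s : seq 'X_{1..n}) m : {in s, forall q, mdeg q <= d} ->
  (m \in map (mnm_pad d) s) = (mdeg m == d) && (mnm_init m \in s).
Proof.
move=> s_deg; apply/mapP/andP => [[q q_in ->]|[/eqP m_deg m_in]].
  by rewrite mdeg_snoc mnm_init_snoc subnKC ?s_deg.
exists (mnm_init m) => //; rewrite /mnm_pad -{1}(mnm_snoc_init m).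
by congr mnm_snoc; move: (mdeg_init m); rewrite m_deg; lia.
Qed.

End Pad.

Section StdSetStep.
Variables (n : nat) (h : nat -> nat) (T : pred 'X_{1..n}).
Variable LT : nat -> seq 'X_{1..n}.
Hypotheses (T_ideal : order_ideal T) (T_alm : std_almost_revlex T).
Hypothesis LT_enum : enumerates (hdiff h 1) T LT.

(* [fin] says whether h has a descent; if so r0 is the first one, otherwise r0
   plays no role. *)
Variables (fin : bool) (r0 : nat).
Hypotheses (r0_gt0 : 0 < r0) (h0 : h 0 = 1).
Hypothesis h_incr : forall e, 0 < e -> ~~ fin || (e < r0) -> h e.-1 < h e.
Hypothesis h_decr : fin -> forall d, r0 <= d -> h d <= h d.-1.

Definition in_tail d := fin && (r0 <= d).

Lemma in_tail_mono d d' : d <= d' -> in_tail d -> in_tail d'.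
Proof. by move=> le /andP[fin_r r_le]; rewrite /in_tail fin_r (leq_trans r_le). Qed.

Lemma h_incr_upto d : ~~ in_tail d -> forall e, 0 < e <= d -> h e.-1 <= h e.
Proof.
move=> d_tail e /andP[e_gt0 e_le]; apply: ltnW; apply: h_incr => //.
move: d_tail; rewrite /in_tail negb_and -ltnNge => /orP[-> // | d_lt].
by rewrite (leq_ltn_trans e_le d_lt) orbT.
Qed.

Lemma h_nonincr d' d : fin -> r0.-1 <= d' <= d -> h d <= h d'.
Proof.
move=> fin_r /andP[le_r le_d]; elim: d le_d => [|d IH]; first by rewrite leqn0 => /eqP->.
rewrite leq_eqVlt ltnS => /orP[/eqP-> // | le_d].
by apply: leq_trans (IH le_d); apply: h_decr => //; lia.
Qed.

Lemma T_mdeg_lt q : fin -> T q -> mdeg q < r0.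
Proof.
move=> fin_r Tq; rewrite ltnNge; apply/negP => r_le.
have [_ LT_size LT_mem] := LT_enum (mdeg q).
have : q \in LT (mdeg q) by rewrite LT_mem eqxx.
suff -> : LT (mdeg q) = [::] by [].
apply: size0nil; rewrite LT_size.
have /= := h_decr fin_r r_le.
by case: (mdeg q) r_le => [|d] /=; [lia | move=> _ /eqP].
Qed.

Fixpoint std_below k := if k is k'.+1 then std_below k' ++ LT k' else [::].

Lemma mem_T_below k q : (q \in std_below k) = (mdeg q < k) && T q.
Proof.
elim: k => [|k IH] //=; have [_ _ LT_mem] := LT_enum k.
by rewrite mem_cat IH LT_mem -andb_orl ltnS [in RHS]leq_eqVlt orbC.
Qed.

Lemma uniq_T_below k : uniq (std_below k).
Proof.
elim: k => [|k IH] //=; have [LT_uniq _ LT_mem] := LT_enum k.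
rewrite cat_uniq IH LT_uniq andbT /=; apply/hasPn => q.
by rewrite LT_mem mem_T_below => /andP[/eqP-> _]; rewrite ltnn.
Qed.

Lemma size_T_below k : size (std_below k) = \sum_(e < k) hdiff h 1 e.
Proof.
elim: k => [|k IH]; first by rewrite big_ord0.
by rewrite /= size_cat IH big_ord_recr; have [_ -> _] := LT_enum k.
Qed.

Lemma size_T_below_notail d : ~~ in_tail d -> size (std_below d.+1) = h d.
Proof. by move=> d_tail; rewrite size_T_below sum_hdiff1 //; exact: h_incr_upto. Qed.

Definition tail_base := sort (@grevlex_leq n) (std_below r0).

Lemma mem_tail_base q : (q \in tail_base) = (mdeg q < r0) && T q.
Proof. by rewrite mem_sort mem_T_below. Qed.

Lemma size_tail_base : size tail_base = h r0.-1.
Proof.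
rewrite size_sort -(prednK r0_gt0) size_T_below_notail //.
by rewrite /in_tail negb_and -ltnNge prednK // leqnn orbT.
Qed.

Lemma sorted_tail_base : sorted (@grevlex_leq n) tail_base.
Proof. exact/sort_sorted/grevlex_leq_total. Qed.

Definition lifted_std (m : 'X_{1..n.+1}) : bool :=
  if in_tail (mdeg m) then mnm_init m \in take (h (mdeg m)) tail_base
  else T (mnm_init m).

Lemma lifted_std_init m : lifted_std m -> T (mnm_init m).
Proof.
by rewrite /lifted_std; case: in_tail => // /mem_take; rewrite mem_tail_base => /andP[].
Qed.

Lemma lifted_std_ideal : order_ideal lifted_std.
Proof.
move=> m c Sm c_le; move: (c_le); rewrite lem_init => /andP[init_le _].
have Tm := lifted_std_init Sm.
rewrite /lifted_std; case c_tail: (in_tail (mdeg c)); last exact: T_ideal Tm init_le.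
have fin_r : fin by case/andP: c_tail.
move: Sm; rewrite /lifted_std (in_tail_mono (lem_mdeg c_le) c_tail) => m_in.
have le_h : h (mdeg m) <= h (mdeg c).
  by apply: h_nonincr => //; move: c_tail (lem_mdeg c_le); rewrite /in_tail fin_r /=; lia.
suff : mnm_init c \in take (h (mdeg m)) (take (h (mdeg c)) tail_base) by move/mem_take.
rewrite take_takel //; case: (eqVneq (mnm_init c) (mnm_init m)) => [-> // | ne].
apply: (mem_take_sorted (@grevlex_leq_trans n) sorted_tail_base m_in).
  by rewrite mem_tail_base T_mdeg_lt // (T_ideal Tm init_le).
by apply: grevlex_leqNgt; left; apply: lem_mdeg_lt.
Qed.

Lemma lifted_std_almost_revlex : std_almost_revlex lifted_std.
Proof.
move=> a b Sb_n b_min eab a_gt; have [last_le init_gt] := degrevlex_gt_init eab a_gt.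
case b_last: (b ord_max) => [|j].
  have a_last : a ord_max = 0 by move: last_le; rewrite b_last leqn0 => /eqP.
  have eab_init : mdeg (mnm_init a) = mdeg (mnm_init b).
    by move: eab; rewrite (mdeg_init a) (mdeg_init b) a_last b_last !addn0.
  have a_deg : mdeg a = mdeg (mnm_init a) by rewrite (mdeg_init a) a_last addn0.
  rewrite /lifted_std; case a_tail: (in_tail (mdeg a)).
    apply/negP => /mem_take; rewrite mem_tail_base => /andP[a_lt _].
    by move: a_tail; rewrite /in_tail a_deg leqNgt a_lt andbF.
  move: Sb_n; rewrite /lifted_std -eab a_tail => Tb_n.
  apply: (T_alm Tb_n _ eab_init init_gt).
  move=> c c_le c_ne; have : lifted_std (mnm_snoc c 0).
    apply: b_min; first by rewrite -(mnm_snoc_init b) b_last lem_snoc c_le.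
    by apply: contra c_ne => /eqP/(congr1 (@mnm_init _)); rewrite mnm_init_snoc => ->.
  rewrite /lifted_std mdeg_snoc addn0 mnm_init_snoc; case: ifP => // c_tail.
  have : in_tail (mdeg a) by apply: in_tail_mono c_tail; rewrite a_deg eab_init lem_mdeg.
  by rewrite a_tail.
set c := mnm_snoc (mnm_init b) j.
have Sc : lifted_std c.
  apply: b_min; first by rewrite -(mnm_snoc_init b) b_last lem_snoc lepm_refl leqnSn.
  by rewrite -[X in _ != X](mnm_snoc_init b) b_last; apply/eqP => /mnm_snoc_inj[_]; lia.
have Tb : T (mnm_init b) by move: (lifted_std_init Sc); rewrite mnm_init_snoc.
case b_tail: (in_tail (mdeg b)); last by move: Sb_n; rewrite /lifted_std b_tail Tb.
have fin_r : fin by case/andP: b_tail.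
apply: contra Sb_n; rewrite /lifted_std eab b_tail => a_in.
apply: (mem_take_sorted (@grevlex_leq_trans n) sorted_tail_base a_in).
  by rewrite mem_tail_base T_mdeg_lt.
exact: grevlex_leqNgt.
Qed.

Definition lifted_enum d : seq 'X_{1..n.+1} :=
  map (mnm_pad d) (if in_tail d then take (h d) tail_base else std_below d.+1).

Lemma lifted_enum_spec : enumerates h lifted_std lifted_enum.
Proof.
move=> d; rewrite /lifted_enum; split.
- rewrite (map_inj_uniq (@mnm_pad_inj _ d)).
  by case: in_tail; [apply/take_uniq; rewrite sort_uniq |]; apply: uniq_T_below.
- rewrite size_map; case d_tail: (in_tail d); last exact/size_T_below_notail/negbT.
  rewrite size_takel // size_tail_base; apply: h_nonincr; first by case/andP: d_tail.
  by move: d_tail; rewrite /in_tail => /andP[_]; lia.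
move=> m; rewrite mem_map_pad => [|q].
  case: (eqVneq (mdeg m) d) => [<- | _] //; rewrite /lifted_std.
  by case: in_tail => //; rewrite mem_T_below ltnS (mdeg_init m) leq_addr.
case d_tail: (in_tail d); last by rewrite mem_T_below ltnS => /andP[].
move/mem_take; rewrite mem_tail_base => /andP[q_lt _].
by move: d_tail; rewrite /in_tail => /andP[_]; lia.
Qed.

End StdSetStep.

Lemma std_set_step n h : h 0 = 1 -> unimodal_at_each_tail h ->
  (exists T, std_set n (hdiff h 1) T) -> exists S, std_set n.+1 h S.
Proof.
move=> h0 h_unimodal [T [T_ideal T_alm [LT LT_enum]]].
have std_set_S fin r0 : 0 < r0 ->
    (forall e, 0 < e -> ~~ fin || (e < r0) -> h e.-1 < h e) ->
    (fin -> forall d, r0 <= d -> h d <= h d.-1) -> exists S, std_set n.+1 h S.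
  move=> r0_gt0 h_incr h_decr; exists (lifted_std h T LT fin r0); split.
  - exact: lifted_std_ideal.
  - exact: lifted_std_almost_revlex.
  - by exists (lifted_enum h LT fin r0); apply: lifted_enum_spec.
case: (classic (r_finite h 0)) => [[d [d_gt0 h_d]] | no_descent]; last first.
  apply: (std_set_S false 1) => // e e_gt0 _; rewrite ltnNge; apply/negP => h_e.
  by apply: no_descent; exists e.
have descent : exists d, (0 < d) && (h d <= h d.-1) by exists d; rewrite d_gt0.
have [r0 /andP[r0_gt0 h_r0] r0_min] := ex_minnP descent.
have h_incr e : 0 < e -> e < r0 -> h e.-1 < h e.
  move=> e_gt0 e_lt; rewrite ltnNge; apply/negP => h_e.
  by move: (r0_min e); rewrite e_gt0 h_e leqNgt e_lt => /(_ isT).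
apply: (std_set_S true r0) => // _ d' r0_le.
apply: (h_unimodal 0 _ _ r0) => //; first by rewrite leq_max.
by exists 0; split => //; exists d.
Qed.

Lemma std_set_exists n h : h 0 = 1 -> h 1 = n -> unimodal_at_each_tail h ->
  exists S, std_set n h S.
Proof.
elim: n h => [|n IH] h h0 h1 h_unimodal.
  by apply: std_set_trivial => //; apply: unimodal_vanish.
apply: std_set_step => //; apply: IH => //; last exact: unimodal_hdiff1.
by rewrite /= h1 h0 subn1.
Qed.

Local Open Scope ring_scope.
Import GRing.Theory.

Lemma kermx_row_nonzero (k : fieldType) m (A : 'M[k]_(m.+1, m)) :
  exists2 u : 'rV[k]_m.+1, u != 0 & u *m A = 0.
Proof.
have : kermx A != 0.
  by rewrite kermx_eq0 /row_free; move: (rank_leq_col A); lia.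
case/rowV0Pn => u /sub_kermxP uA u_neq0; by exists u.
Qed.

Section StdIdeal.
Variables (k : fieldType) (n : nat) (S : pred 'X_{1..n}).

Definition std_ideal (p : {mpoly k[n]}) : Prop :=
  forall m, m \in msupp p -> ~~ S m.

Lemma std_idealX m : std_ideal 'X_[m] <-> ~~ S m.
Proof.
rewrite /std_ideal msuppX; split => [|Sm_n m']; first by apply; rewrite inE.
by rewrite inE => /eqP->.
Qed.

Lemma std_ideal_monomial : order_ideal S -> is_monomial_ideal std_ideal.
Proof.
move=> S_ideal; split; first split.
- by move=> m; rewrite mcoeff_msupp mcoeff0 eqxx.
- by move=> p q Ip Iq m /msuppD_le; rewrite mem_cat => /orP[/Ip | /Iq].
- move=> p q Iq m /msuppM_le /allpairsP[[m1 m2] [/= _ m2_in ->]].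
  by apply: contra (Iq m2 m2_in) => /S_ideal; apply; rewrite lem_addl.
- by move=> p Ip m /Ip /std_idealX.
Qed.

Lemma std_ideal_almost_revlex : std_almost_revlex S -> almost_revlex std_ideal.
Proof.
move=> S_alm a b [/std_idealX Sb_n b_min] eab a_gt; apply/std_idealX.
apply: (S_alm a b) => // c c_le c_ne; apply/negPn/negP => /std_idealX.
exact: b_min.
Qed.

Lemma std_monomials_indep v (s : seq 'X_{1..n}) :
  uniq s -> size s = v -> {in s, forall m, S m} ->
  lin_indep_mod std_ideal (fun i : 'I_v => 'X_[nth 0%MM s i]).
Proof.
move=> s_uniq s_size s_std c I_c i; apply/eqP/contraT => c_i.
have s_i : nth 0%MM s i \in s by rewrite mem_nth // s_size.
have : nth 0%MM s i \in msupp (\sum_(j < v) c j *: 'X_[nth 0%MM s j]).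
  rewrite mcoeff_msupp raddf_sum (bigD1 i) //= mcoeffZ mcoeffX eqxx mulr1.
  rewrite big1 ?addr0 // => j j_neq; rewrite mcoeffZ mcoeffX.
  by rewrite nth_uniq ?s_size // (negbTE (j_neq : j != i :> nat)) mulr0.
by move/I_c; rewrite s_std.
Qed.

Lemma homog_dependent d v (s : seq 'X_{1..n}) : size s = v ->
  (forall m, mdeg m = d -> S m -> m \in s) ->
  forall ps : 'I_v.+1 -> {mpoly k[n]},
    (forall i, ps i \is d.-homog) -> ~ lin_indep_mod std_ideal ps.
Proof.
move=> s_size s_std ps ps_homog ps_indep.
pose A : 'M[k]_(v.+1, v) := \matrix_(i, j) (ps i)@_(nth 0%MM s j).
have [u u_neq0 uA] := kermx_row_nonzero A.
move/negP: u_neq0; apply; apply/eqP/rowP => i; rewrite mxE.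
apply: (ps_indep (fun i => u 0 i)) => m.
set p := \sum_(i < _) _; have p_homog : p \is d.-homog.
  by apply: rpred_sum => i' _; apply: rpredZ.
move=> m_in; apply/negP => Sm.
have m_s : m \in s by apply: s_std => //; apply: (dhomog_mf p_homog).
have m_idx : (index m s < v)%N by rewrite -s_size index_mem.
move: m_in; rewrite mcoeff_msupp.
suff -> : p@_m = (u *m A) 0 (Ordinal m_idx) by rewrite uA mxE eqxx.
rewrite raddf_sum !mxE; apply: eq_bigr => i' _.
by rewrite mxE; apply: etrans (mcoeffZ _ _ m) _; rewrite /= nth_index.
Qed.

Lemma std_ideal_hilb h L : enumerates h S L -> forall d, hilb_eq std_ideal d (h d).
Proof.
move=> L_enum d; have [L_uniq L_size L_mem] := L_enum d.
split; last by apply: (homog_dependent L_size) => m m_deg Sm; rewrite L_mem m_deg eqxx.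
exists (fun i => 'X_[nth 0%MM (L d) i]); split.
  move=> i; rewrite dhomogX.
  have : nth 0%MM (L d) i \in L d by rewrite mem_nth // L_size.
  by rewrite L_mem => /andP[].
by apply: std_monomials_indep => // m; rewrite L_mem => /andP[].
Qed.

End StdIdeal.

Theorem theorem3p9 (k : fieldType) (h : nat -> nat) :
  h 0%N = 1%N ->
  unimodal_at_each_tail h ->
  exists I : {mpoly k[maxn 1 (h 1%N)]} -> Prop,
    [/\ is_monomial_ideal I, almost_revlex I &
        forall d : nat, hilb_eq I d (h d)].
Proof.
move=> h0 h_unimodal.
have [S [S_ideal S_alm [L L_enum]]] : exists S, std_set (maxn 1 (h 1%N)) h S.
  case h1: (h 1%N) => [|n]; first by apply: std_set_trivial => //; apply: unimodal_vanish.
  by rewrite (maxn_idPr (ltn0Sn n)); apply: std_set_exists.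
exists (@std_ideal k _ S); split.
- exact: std_ideal_monomial.
- exact: std_ideal_almost_revlex.
- exact: std_ideal_hilb L_enum.
Qed.
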